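(* Let $D=3$, $L>0$, $\omega>0$, and define on $\mathbb R\times[-L/2,L/2]$ the maps $T(\tau,\sigma):=\tau$ and $$Y(\tau,\sigma):=(\sigma\cos\omega\tau,\ \sigma\sin\omega\tau)\in\mathbb R^2 .$$ Then $Y'^2=1$ and $(\dot Y,Y')=0$ identically, $(T,Y)$ satisfies the Euler–Lagrange equations of $L_{ns}$ on $\mathbb R\times(-L/2,L/2)$, and the free-end boundary conditions $$\frac{\partial L_{ns}}{\partial T'}\Big|_{\sigma=\pm L/2}=0,\qquad \frac{\partial L_{ns}}{\partial Y'^i}\Big|_{\sigma=\pm L/2}=0\ \ (i=1,2)$$ hold for all $\tau$ if and only if $L\omega=2\sqrt2$.
   Context: Coordinates are $(\tau,\sigma)$; dot and prime denote $\partial_\tau$, $\partial_\sigma$. For vectors in $\mathbb R^{2}$, $(\cdot,\cdot)$ is the Euclidean scalar product and $V^2=(V,V)$. Units with speed of light $c=1$. Fix a constant $\rho>0$. Define $$A^2:=\dot T^2Y'^2+T'^2\dot Y^2-2\dot TT'(\dot Y,Y'),\qquad N:=\dot Y^2Y'^2-(\dot Y,Y')^2,$$ and the nonrelativistic string Lagrangian density, regarded as a function of $(\dot T,T',\dot Y,Y')$ on the region $A^2>0$: $$L_{ns}:=\rho\Big[\frac{N}{2\sqrt{A^2}}-\sqrt{A^2}\Big].$$ The Euler–Lagrange equations of $L_{ns}$ are $$\partial_\tau\frac{\partial L_{ns}}{\partial\dot T}+\partial_\sigma\frac{\partial L_{ns}}{\partial T'}=0,\qquad \partial_\tau\frac{\partial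 L_{ns}}{\partial\dot Y^i}+\partial_\sigma\frac{\partial L_{ns}}{\partial Y'^i}=0\quad(i=1,2),$$ where the partial derivatives of $L_{ns}$ are evaluated along $(T,Y)$. *)

From Stdlib Require Import Reals Lra.
From Coquelicot Require Import Coquelicot.
Open Scope R_scope.

Definition dot (v w : R * R) : R := fst v * fst w + snd v * snd w.

Definition A2 (td tp : R) (yd yp : R * R) : R :=
  td ^ 2 * dot yp yp + tp ^ 2 * dot yd yd - 2 * td * tp * dot yd yp.

Definition Nf (yd yp : R * R) : R := dot yd yd * dot yp yp - (dot yd yp) ^ 2.

Definition Lns (rho td tp : R) (yd yp : R * R) : R :=
  rho * (Nf yd yp / (2 * sqrt (A2 td tp yd yp)) - sqrt (A2 td tp yd yp)).

Definition setc (i : nat) (v : R * R) (x : R) : R * R :=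
  if Nat.eqb i 1 then (x, snd v) else (fst v, x).
Definition comp (i : nat) (v : R * R) : R :=
  if Nat.eqb i 1 then fst v else snd v.

Definition dL_dTd rho td tp yd yp := Derive (fun x => Lns rho x tp yd yp) td.
Definition dL_dTp rho td tp yd yp := Derive (fun x => Lns rho td x yd yp) tp.
Definition dL_dYd (i : nat) rho td tp yd yp :=
  Derive (fun x => Lns rho td tp (setc i yd x) yp) (comp i yd).
Definition dL_dYp (i : nat) rho td tp yd yp :=
  Derive (fun x => Lns rho td tp yd (setc i yp x)) (comp i yp).

Definition dtau (F : R -> R -> R) (t s : R) : R := Derive (fun t' => F t' s) t.
Definition dsig (F : R -> R -> R) (t s : R) : R := Derive (fun s' => F t s') s.
Definition Ydot (Y : R -> R -> R * R) (t s : R) : R * R :=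
  (dtau (fun a b => fst (Y a b)) t s, dtau (fun a b => snd (Y a b)) t s).
Definition Yprime (Y : R -> R -> R * R) (t s : R) : R * R :=
  (dsig (fun a b => fst (Y a b)) t s, dsig (fun a b => snd (Y a b)) t s).

Definition PTd rho (T : R -> R -> R) Y t s :=
  dL_dTd rho (dtau T t s) (dsig T t s) (Ydot Y t s) (Yprime Y t s).
Definition PTp rho (T : R -> R -> R) Y t s :=
  dL_dTp rho (dtau T t s) (dsig T t s) (Ydot Y t s) (Yprime Y t s).
Definition PYd i rho (T : R -> R -> R) Y t s :=
  dL_dYd i rho (dtau T t s) (dsig T t s) (Ydot Y t s) (Yprime Y t s).
Definition PYp i rho (T : R -> R -> R) Y t s :=
  dL_dYp i rho (dtau T t s) (dsig T t s) (Ydot Y t s) (Yprime Y t s).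

Definition EL_at rho (T : R -> R -> R) (Y : R -> R -> R * R) (t s : R) : Prop :=
  ex_derive (fun t' => PTd rho T Y t' s) t /\
  ex_derive (fun s' => PTp rho T Y t s') s /\
  Derive (fun t' => PTd rho T Y t' s) t + Derive (fun s' => PTp rho T Y t s') s = 0 /\
  (forall i : nat, (i = 1%nat \/ i = 2%nat) ->
     ex_derive (fun t' => PYd i rho T Y t' s) t /\
     ex_derive (fun s' => PYp i rho T Y t s') s /\
     Derive (fun t' => PYd i rho T Y t' s) t + Derive (fun s' => PYp i rho T Y t s') s = 0).

Definition Tsol (t s : R) : R := t.
Definition Ysol (om : R) (t s : R) : R * R := (s * cos (om * t), s * sin (om * t)).

(* In the static gauge T = tau the Lagrangian's momenta at a point where
   A^2 = Y'^2 = 1 and (Ydot, Y') = 0 are: dL/dTdot = -rho (Ydot^2/2 + 1),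
   dL/dT' = 0, dL/dYdot = rho Ydot and dL/dY' = rho (Ydot^2/2 - 1) Y'.
   For the rotating rod Ydot^2 = (sigma omega)^2, so the Y'-momentum is the
   tension rho ((sigma omega)^2/2 - 1) along the rod; the Euler-Lagrange
   equation for Y says that its sigma-derivative rho sigma omega^2 Y' balances
   the centripetal term d/dtau (rho Ydot) = -rho sigma omega^2 Y'.  The free-end
   conditions ask the tension to vanish at sigma = +-L/2, i.e.
   (L omega)^2 = 8. *)
From Stdlib Require Import Reals Lra.
From Coquelicot Require Import Coquelicot.
Open Scope R_scope.

Lemma is_derive_Lns_unit (rho : R) (g h : R -> R) (x g' h' l : R) :
  is_derive g x g' -> is_derive h x h' -> g x = 1 ->
  l = rho * (h' / 2 - h x * g' / 4 - g' / 2) ->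
  is_derive (fun y => rho * (h y / (2 * sqrt (g y)) - sqrt (g y))) x l.
Proof.
intros Hg Hh Hg1 ->.
assert (Eg : Derive g x = g') by now apply is_derive_unique.
assert (Eh : Derive h x = h') by now apply is_derive_unique.
auto_derive.
- rewrite Hg1, sqrt_1; repeat split; try lra.
  + now exists h'.
  + now exists g'.
  + now exists g'.
- change (Derive (fun y => h y) x) with (Derive h x).
  change (Derive (fun y => g y) x) with (Derive g x).
  rewrite Eg, Eh, Hg1, sqrt_1; field.
Qed.

Section StaticGauge.
Variables (rho : R) (v w : R * R).
Hypothesis w_unit : dot w w = 1.
Hypothesis vw_orth : dot v w = 0.

(* [g] and [h] are A^2 and N along a coordinate line; only the final
   identification of the value is left to the caller. *)
Ltac Lns_partial g' h' :=
  apply is_derive_unique; unfold Lns;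
  eapply (is_derive_Lns_unit _ _ _ _ g' h');
  [ unfold A2, dot, setc; simpl; auto_derive; trivial; rewrite ?w_unit, ?vw_orth; ring
  | unfold Nf, dot, setc; simpl; auto_derive; trivial; rewrite ?w_unit, ?vw_orth; ring
  | unfold A2, dot, setc; simpl; rewrite w_unit; ring
  | idtac ].

Lemma dL_dTd_static : dL_dTd rho 1 0 v w = - rho * (dot v v / 2 + 1).
Proof.
destruct v as [a b], w as [c d]; unfold dot in *; simpl in *.
unfold dL_dTd. Lns_partial 2 0.
unfold Nf, dot; simpl; rewrite w_unit, vw_orth; field.
Qed.

Lemma dL_dTp_static : dL_dTp rho 1 0 v w = 0.
Proof.
destruct v as [a b], w as [c d]; unfold dot in *; simpl in *.
unfold dL_dTp. Lns_partial 0 0.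
field.
Qed.

Lemma dL_dYd_static (i : nat) : (i = 1 \/ i = 2)%nat ->
  dL_dYd i rho 1 0 v w = rho * comp i v.
Proof.
destruct v as [a b], w as [c d]; unfold dot in *; simpl in *.
intros [-> | ->]; unfold dL_dYd, comp; simpl.
- Lns_partial 0 (2 * a). field.
- Lns_partial 0 (2 * b). field.
Qed.

Lemma dL_dYp_static (i : nat) : (i = 1 \/ i = 2)%nat ->
  dL_dYp i rho 1 0 v w = rho * comp i w * (dot v v / 2 - 1).
Proof.
destruct v as [a b], w as [c d]; unfold dot in *; simpl in *.
intros [-> | ->]; unfold dL_dYp, comp; simpl.
- Lns_partial (2 * c) (2 * c * (a * a + b * b)).
  unfold Nf, dot; simpl; rewrite w_unit, vw_orth; field.
- Lns_partial (2 * d) (2 * d * (a * a + b * b)).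
  unfold Nf, dot; simpl; rewrite w_unit, vw_orth; field.
Qed.

End StaticGauge.

Lemma divergence_eq0_of_is_derive (f g : R -> R) (t s df dg : R) :
  is_derive f t df -> is_derive g s dg -> df + dg = 0 ->
  ex_derive f t /\ ex_derive g s /\ Derive f t + Derive g s = 0.
Proof.
intros Hf Hg Hsum; split; [|split].
- now exists df.
- now exists dg.
- now rewrite (is_derive_unique _ _ _ Hf), (is_derive_unique _ _ _ Hg).
Qed.

Section RotatingRod.
Variables (rho om : R).

Lemma dtau_Tsol t s : dtau Tsol t s = 1.
Proof. apply is_derive_unique; unfold Tsol; auto_derive; trivial. Qed.

Lemma dsig_Tsol t s : dsig Tsol t s = 0.
Proof. apply is_derive_unique; unfold Tsol; auto_derive; trivial. Qed.

Lemma Ydot_Ysol t s :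
  Ydot (Ysol om) t s = (- (s * om * sin (om * t)), s * om * cos (om * t)).
Proof.
unfold Ydot, dtau, Ysol; simpl.
f_equal; apply is_derive_unique; auto_derive; trivial; ring.
Qed.

Lemma Yprime_Ysol t s : Yprime (Ysol om) t s = (cos (om * t), sin (om * t)).
Proof.
unfold Yprime, dsig, Ysol; simpl.
f_equal; apply is_derive_unique; auto_derive; trivial; ring.
Qed.

Lemma Yprime_Ysol_unit t s : dot (Yprime (Ysol om) t s) (Yprime (Ysol om) t s) = 1.
Proof.
rewrite Yprime_Ysol; unfold dot; simpl.
rewrite <- (sin2_cos2 (om * t)); unfold Rsqr; ring.
Qed.

Lemma Ydot_Yprime_Ysol_orth t s : dot (Ydot (Ysol om) t s) (Yprime (Ysol om) t s) = 0.
Proof. rewrite Ydot_Ysol, Yprime_Ysol; unfold dot; simpl; ring. Qed.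

Lemma Ydot_Ysol_sqr t s : dot (Ydot (Ysol om) t s) (Ydot (Ysol om) t s) = (s * om) ^ 2.
Proof.
rewrite Ydot_Ysol; unfold dot; cbn [fst snd].
rewrite <- (Rmult_1_r ((s * om) ^ 2)), <- (sin2_cos2 (om * t)); unfold Rsqr; ring.
Qed.

Lemma PTd_Ysol t s : PTd rho Tsol (Ysol om) t s = - rho * ((s * om) ^ 2 / 2 + 1).
Proof.
unfold PTd; rewrite dtau_Tsol, dsig_Tsol, dL_dTd_static, Ydot_Ysol_sqr; trivial.
- apply Yprime_Ysol_unit.
- apply Ydot_Yprime_Ysol_orth.
Qed.

Lemma PTp_Ysol t s : PTp rho Tsol (Ysol om) t s = 0.
Proof.
unfold PTp; rewrite dtau_Tsol, dsig_Tsol, dL_dTp_static; trivial.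
- apply Yprime_Ysol_unit.
- apply Ydot_Yprime_Ysol_orth.
Qed.

Lemma PYd_Ysol i t s : (i = 1 \/ i = 2)%nat ->
  PYd i rho Tsol (Ysol om) t s = rho * comp i (Ydot (Ysol om) t s).
Proof.
intros Hi; unfold PYd; rewrite dtau_Tsol, dsig_Tsol, dL_dYd_static; trivial.
- apply Yprime_Ysol_unit.
- apply Ydot_Yprime_Ysol_orth.
Qed.

Lemma PYp_Ysol i t s : (i = 1 \/ i = 2)%nat ->
  PYp i rho Tsol (Ysol om) t s =
  rho * comp i (cos (om * t), sin (om * t)) * ((s * om) ^ 2 / 2 - 1).
Proof.
intros Hi; unfold PYp; rewrite dtau_Tsol, dsig_Tsol, dL_dYp_static; trivial.
- now rewrite Ydot_Ysol_sqr, Yprime_Ysol.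
- apply Yprime_Ysol_unit.
- apply Ydot_Yprime_Ysol_orth.
Qed.

Lemma EL_at_Ysol t s : EL_at rho Tsol (Ysol om) t s.
Proof.
set (e i t' := comp i (cos (om * t'), sin (om * t'))).
assert (HT : ex_derive (fun t' => PTd rho Tsol (Ysol om) t' s) t /\
             ex_derive (fun s' => PTp rho Tsol (Ysol om) t s') s /\
             Derive (fun t' => PTd rho Tsol (Ysol om) t' s) t +
             Derive (fun s' => PTp rho Tsol (Ysol om) t s') s = 0).
{ apply divergence_eq0_of_is_derive with (df := 0) (dg := 0); [| | ring].
  - eapply is_derive_ext; [intro; symmetry; apply PTd_Ysol | auto_derive; trivial].
  - eapply is_derive_ext; [intro; symmetry; apply PTp_Ysol | auto_derive; trivial]. }
assert (HY : forall i, (i = 1 \/ i = 2)%nat ->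
  ex_derive (fun t' => PYd i rho Tsol (Ysol om) t' s) t /\
  ex_derive (fun s' => PYp i rho Tsol (Ysol om) t s') s /\
  Derive (fun t' => PYd i rho Tsol (Ysol om) t' s) t +
  Derive (fun s' => PYp i rho Tsol (Ysol om) t s') s = 0).
{ intros i Hi.
  apply divergence_eq0_of_is_derive with (df := - (rho * s * om ^ 2 * e i t))
                         (dg := rho * s * om ^ 2 * e i t); [| | ring].
  - eapply is_derive_ext.
    { intro t'; symmetry; rewrite (PYd_Ysol _ _ _ Hi), Ydot_Ysol; reflexivity. }
    unfold e; destruct Hi as [-> | ->]; unfold comp; simpl; auto_derive; trivial; ring.
  - eapply is_derive_ext.
    { intro s'; symmetry; rewrite (PYp_Ysol _ _ _ Hi); reflexivity. }
    unfold e; destruct Hi as [-> | ->]; unfold comp; simpl; auto_derive; trivial; field. }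
unfold EL_at; tauto.
Qed.

End RotatingRod.

Lemma sqr_eq_8_iff (x : R) : 0 < x -> x ^ 2 = 8 <-> x = 2 * sqrt 2.
Proof.
intros Hx.
pose proof (sqrt_sqrt 2 ltac:(lra)) as H2.
pose proof (sqrt_lt_R0 2 ltac:(lra)) as Hpos.
split; intros H; [nra | subst x; nra].
Qed.

Lemma free_end_tension_iff (L om s : R) : 0 < L * om -> (s = L / 2 \/ s = - (L / 2)) ->
  (s * om) ^ 2 / 2 - 1 = 0 <-> L * om = 2 * sqrt 2.
Proof.
intros HLom Hs.
assert (Hsq : (s * om) ^ 2 = (L * om) ^ 2 / 4) by (destruct Hs as [-> | ->]; field).
rewrite <- sqr_eq_8_iff by exact HLom; lra.
Qed.

Theorem mainTheorem7 (rho L om : R) (hrho : 0 < rho) (hL : 0 < L) (hom : 0 < om) :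
  (forall t s, -(L/2) <= s <= L/2 ->
     dot (Yprime (Ysol om) t s) (Yprime (Ysol om) t s) = 1 /\
     dot (Ydot (Ysol om) t s) (Yprime (Ysol om) t s) = 0) /\
  (forall t s, -(L/2) < s < L/2 -> EL_at rho Tsol (Ysol om) t s) /\
  ((forall t, forall s, (s = L/2 \/ s = -(L/2)) ->
      PTp rho Tsol (Ysol om) t s = 0 /\
      (forall i : nat, (i = 1%nat \/ i = 2%nat) -> PYp i rho Tsol (Ysol om) t s = 0))
   <-> L * om = 2 * sqrt 2).
Proof.
assert (HLom : 0 < L * om) by nra.
split; [|split].
- intros t s _; split; [apply Yprime_Ysol_unit | apply Ydot_Yprime_Ysol_orth].
- intros t s _; apply EL_at_Ysol.
- split.
  + intros Hfree.
    destruct (Hfree 0 (L / 2) (or_introl eq_refl)) as [_ HY].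
    specialize (HY 1%nat (or_introl eq_refl)).
    rewrite PYp_Ysol in HY by now left.
    unfold comp in HY; simpl in HY; rewrite Rmult_0_r, cos_0 in HY.
    apply (free_end_tension_iff L om (L / 2) HLom (or_introl eq_refl)).
    destruct (Rmult_integral _ _ HY) as [H | H]; [lra | exact H].
  + intros Hc t s Hs; split; [apply PTp_Ysol |].
    intros i Hi; rewrite PYp_Ysol by exact Hi.
    rewrite (proj2 (free_end_tension_iff L om s HLom Hs) Hc); ring.
Qed.
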